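(* Let $\mathcal{F}=(M,\{A^u\}_{u\in Q})$ be an FDFA and let $\mathcal{D}_1$ be the automaton constructed from it as in the context. Then $L(\mathcal{D}_1)=\{u\$v\mid u\in\Sigma^*,\ v\in\Sigma^*,\ M(uv)=M(u),\ v\in L(A^{M(u)})\}$.
   Context: $\Sigma$ is a finite alphabet and $\$\notin\Sigma$. For a complete DFA $A$ and finite word $w$, $A(w)$ is the state reached from the initial state on $w$. An FDFA is $\mathcal{F}=(M,\{A^q\}_{q\in Q})$ with $M=(\Sigma,Q,q_0,\delta)$ a complete DFA without accepting states and each $A^q=(\Sigma,Q^q,s^q,F^q,\delta^q)$ a complete DFA. For a state $u\in Q$, $M^u_u$ is $M$ with initial state $u$ and accepting set $\{u\}$, and $N_u=M^u_u\times A^u$ is the synchronous product DFA (accepting exactly the words accepted by both), written $N_u=(\Sigma,Q_u,s_u,F_u,\delta_u)$. Then $\mathcal{D}_1=(\Sigma\cup\{\$\},\ Q\cup\bigcup_{u\in Q}Q_u,\ q_0,\ \bigcup_{u\in Q}F_u,\ \delta\cup\bigcup_{u\in Q}\delta_u\cup\{(u,\$,s_u)\mid u\in Q\})$, where the sets $Q_u$ are disjoint copies. *)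

From mathcomp Require Import all_boot.
Set Implicit Arguments.

Record dfa (S : Type) := DFA {
  dstate : finType;
  dinit : dstate;
  dfinal : pred dstate;
  dtrans : dstate -> S -> dstate }.
Arguments dinit {S} d.
Arguments dfinal {S} d _.
Arguments dtrans {S d} _ _.

Definition dfa_run S (A : dfa S) (w : seq S) : dstate A :=
  foldl (@dtrans S A) (dinit A) w.
Definition dfa_accepts S (A : dfa S) (w : seq S) : bool :=
  dfinal A (dfa_run A w).

Definition dfa_prod S (A B : dfa S) : dfa S :=
  @DFA S (dstate A * dstate B)%type (dinit A, dinit B)
    (fun p => dfinal A p.1 && dfinal B p.2)
    (fun p a => (dtrans p.1 a, dtrans p.2 a)).

(* FDFA: leading complete DFA M (no accepting states) + progress DFAs A^q. *)
Record fdfa (S : Type) := FDFA {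
  lstate : finType;
  linit : lstate;
  ltrans : lstate -> S -> lstate;
  prog : lstate -> dfa S }.
Arguments linit {S} f.
Arguments ltrans {S f} _ _.
Arguments prog {S} f _.

Definition M_run S (F : fdfa S) (w : seq S) : lstate F :=
  foldl (@ltrans S F) (linit F) w.

Definition M_uu S (F : fdfa S) (u : lstate F) : dfa S :=
  @DFA S (lstate F) u (pred1 u) (@ltrans S F).

Definition N_u S (F : fdfa S) (u : lstate F) : dfa S :=
  dfa_prod (M_uu F u) (prog F u).

Record pdfa (S : Type) := PDFA {
  pstate : Type;
  pinit : pstate;
  pfinal : pred pstate;
  ptrans : pstate -> S -> option pstate }.

Definition prun S (A : pdfa S) (w : seq S) : option (pstate A) :=
  foldl (fun o a => obind (fun q => @ptrans S A q a) o) (Some (pinit A)) w.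
Definition paccepts S (A : pdfa S) (w : seq S) : bool :=
  if prun A w is Some q then pfinal A q else false.

(* The alphabet Sigma u {$} is [option S], with None standing for $.
   The states of D1 are Q + disjoint copies Q_u of the states of N_u. *)
Definition D1_state S (F : fdfa S) : Type :=
  (lstate F + {u : lstate F & dstate (N_u F u)})%type.

Definition D1_trans S (F : fdfa S) (x : D1_state F) (a : option S)
  : option (D1_state F) :=
  match x, a with
  | inl q, Some b => Some (inl (ltrans q b))
  | inl q, None => Some (inr (existT _ q (dinit (N_u F q))))
  | inr (existT u p), Some b => Some (inr (existT _ u (dtrans p b)))
  | inr _, None => None
  end.

Definition D1_final S (F : fdfa S) (x : D1_state F) : bool :=
  match x with
  | inl _ => false
  | inr (existT u p) => dfinal (N_u F u) p
  end.

Definition D1 S (F : fdfa S) : pdfa (option S) :=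
  @PDFA (option S) (D1_state F) (inl (linit F)) (@D1_final S F) (@D1_trans S F).

From mathcomp Require Import all_boot.

Set Implicit Arguments.
Unset Strict Implicit.
Unset Printing Implicit Defensive.

(* On letters of Sigma, D1 runs M, so a $-free prefix u leads to the
   non-accepting state M(u).  Reading $ there moves to the initial state of
   N_q = M^q_q x A^q with q = M(u), which accepts v exactly when M loops on v
   at q and A^q accepts v.  A second $ has no transition. *)

Lemma dfa_prod_foldl S (A B : dfa S) (p : dstate A) (q : dstate B) (v : seq S) :
  foldl (@dtrans S (dfa_prod A B)) (p, q) v
  = (foldl (@dtrans S A) p v, foldl (@dtrans S B) q v).
Proof. by elim: v p q => //= a v IHv p q; rewrite IHv. Qed.

Lemma dfa_prod_accepts S (A B : dfa S) (v : seq S) :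
  dfa_accepts (dfa_prod A B) v = dfa_accepts A v && dfa_accepts B v.
Proof. by rewrite /dfa_accepts /dfa_run dfa_prod_foldl. Qed.

Definition pstep S (A : pdfa S) (o : option (pstate A)) (a : S) : option (pstate A) :=
  obind (fun q => ptrans A q a) o.
Arguments pstep {S} A o a.

Lemma prun_foldl S (A : pdfa S) (w : seq S) :
  prun A w = foldl (pstep A) (Some (pinit A)) w.
Proof. by []. Qed.

Lemma foldl_pstep_None S (A : pdfa S) (w : seq S) : foldl (pstep A) None w = None.
Proof. by elim: w. Qed.

Lemma seq_option_cases (T : Type) (w : seq (option T)) :
  (exists u, w = map Some u) \/ (exists u r, w = map Some u ++ None :: r).
Proof.
elim: w => [|[a|] w [[u ->]|[u [r ->]]]].
- by left; exists [::].
- by left; exists (a :: u).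
- by right; exists (a :: u), r.
- by right; exists [::], (map Some u).
- by right; exists [::], (map Some u ++ None :: r).
Qed.

Section D1Runs.
Variables (S : Type) (F : fdfa S).

Lemma M_run_cat (u v : seq S) : M_run F (u ++ v) = foldl (@ltrans S F) (M_run F u) v.
Proof. exact: foldl_cat. Qed.

Lemma N_u_accepts (q : lstate F) (v : seq S) :
  dfa_accepts (N_u F q) v = (foldl (@ltrans S F) q v == q) && dfa_accepts (prog F q) v.
Proof. exact: dfa_prod_accepts. Qed.

Lemma D1_foldl_leading (q : lstate F) (u : seq S) :
  foldl (pstep (D1 F)) (Some (inl q)) (map Some u)
  = Some (inl (foldl (@ltrans S F) q u)).
Proof. by elim: u q => //= a u IHu q; rewrite IHu. Qed.

Lemma D1_foldl_progress (q : lstate F) (p : dstate (N_u F q)) (v : seq S) :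
  foldl (pstep (D1 F)) (Some (inr (existT _ q p))) (map Some v)
  = Some (inr (existT _ q (foldl (@dtrans S (N_u F q)) p v))).
Proof. by elim: v p => //= a v IHv p; rewrite IHv. Qed.

Lemma D1_prun_dollar (u v : seq S) :
  prun (D1 F) (map Some u ++ None :: map Some v)
  = Some (inr (existT _ (M_run F u) (dfa_run (N_u F (M_run F u)) v))).
Proof.
by rewrite prun_foldl foldl_cat D1_foldl_leading /= D1_foldl_progress.
Qed.

Lemma D1_prun_two_dollars (u v : seq S) (r : seq (option S)) :
  prun (D1 F) (map Some u ++ None :: map Some v ++ None :: r) = None.
Proof.
rewrite prun_foldl foldl_cat D1_foldl_leading /=.
by rewrite foldl_cat D1_foldl_progress /=; exact: (foldl_pstep_None (D1 F)).
Qed.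

Lemma D1_rejects_dollar_free (u : seq S) : ~~ paccepts (D1 F) (map Some u).
Proof. by rewrite /paccepts prun_foldl D1_foldl_leading. Qed.

Lemma D1_accepts_dollar (u v : seq S) :
  paccepts (D1 F) (map Some u ++ None :: map Some v)
  = (M_run F (u ++ v) == M_run F u) && dfa_accepts (prog F (M_run F u)) v.
Proof. rewrite /paccepts D1_prun_dollar M_run_cat; exact: N_u_accepts. Qed.

End D1Runs.

Theorem proposition4 (S : finType) (F : fdfa S) (w : seq (option S)) :
  paccepts (D1 F) w <->
  exists u v : seq S,
    [/\ w = map Some u ++ None :: map Some v,
        M_run F (u ++ v) = M_run F u
      & dfa_accepts (prog F (M_run F u)) v].
Proof.
split; last by move=> [u [v [-> /eqP loop_u acc_v]]]; rewrite D1_accepts_dollar loop_u.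
have [[u ->]|[u [r ->]]] := seq_option_cases w.
  by rewrite (negbTE (D1_rejects_dollar_free F u)).
have [[v ->]|[v [r' ->]]] := seq_option_cases r; last first.
  by rewrite /paccepts D1_prun_two_dollars.
by rewrite D1_accepts_dollar => /andP[/eqP loop_u acc_v]; exists u, v.
Qed.
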